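(* Let $q$ be a prime power and $m\ge1$. Let $H\subseteq\mathbb{F}_{q^m}$ be an $\mathbb{F}_q$-subspace of dimension $h$ over $\mathbb{F}_q$ with $1\le h\le m-2$. Let $x\in\mathbb{F}_{q^m}\setminus H$ and $y\in\mathbb{F}_{q^m}$. Then there exists $\alpha\in\mathbb{F}_{q^m}\setminus H$ such that $x+\alpha y\notin H\oplus\langle\alpha\rangle$, where $\langle\alpha\rangle$ denotes the $\mathbb{F}_q$-span of $\alpha$. *)

From HB Require Import structures.
From mathcomp Require Export all_boot all_order all_algebra all_field.

From HB Require Import structures.
From mathcomp Require Import all_boot all_order all_algebra all_field.
From mathcomp Require Import zify.

(* If [x + a y] lies in [H + <[a]>], say [x + a y = s + c a] with [s] in [H],
   then [y - c] is nonzero (as [x] is not in [H]) and [a = (s - x) / (y - c)].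
   Hence every bad [a] lies in [H] or among the at most [q * q^h] quotients
   [(s - x) / (y - c)] with [c] in [F_q], [s] in [H]; since
   [q^h + q^(h+1) < q^(h+2) <= q^m], some [a] in [F_(q^m)] is good. *)

Set Implicit Arguments.
Unset Strict Implicit.
Unset Printing Implicit Defensive.
Import GRing.Theory.
Local Open Scope ring_scope.

Lemma ltn_expS_add (q n : nat) : (1 < q)%N -> (q ^ n + q ^ n.+1 < q ^ n.+2)%N.
Proof.
move=> q_gt1; have qn_gt0 : (0 < q ^ n)%N by rewrite expn_gt0 ltnW.
rewrite !expnS mulnA -[X in (X + _)%N]mul1n -mulnDl ltn_mul2r qn_gt0 /=.
by rewrite (leq_trans _ (leq_mul q_gt1 (leqnn q))) // mul2n -addnn ltn_add2r.
Qed.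

Section Extension.

Variables (F : finFieldType) (L : fieldExtType F).

Lemma memv_add_line_quotient (H : {vspace L}) (x y a : L) :
  x \notin H -> x + a * y \in (H + <[a]>)%VS ->
  exists c : F, exists2 s, s \in H & a = (s - x) / (y - c%:A).
Proof.
move=> xNH /memv_addP [s sH [v /vlineP [c ->] def_s]]; exists c, s => //.
have {}def_s : s = x + a * (y - c%:A).
  by rewrite mulrBr addrA def_s (mulrC a) mulr_algl addrK.
have [yc0 | ycN0] := eqVneq (y - c%:A) 0.
  by move: xNH; rewrite -[x]addr0 -(mulr0 a) -yc0 -def_s sH.
by rewrite def_s addrC addKr mulfK.
Qed.

Lemma exists_notin_vspace_quotients (H : {vspace L}) (x y : L) :
  (#|F| ^ \dim H + #|F| ^ (\dim H).+1 < #|F| ^ \dim {:L})%N ->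
  exists2 a : L, a \notin H &
    forall (c : F) s, s \in H -> a != (s - x) / (y - c%:A).
Proof.
pose T := finvect_type L.
pose HT : {set T} := [set a : T | a \in H].
pose quot (c : F) (s : T) : T := (s - x) / (y - c%:A).
pose bad := HT :|: quot @2: ([set: F], HT).
have cardHT : #|HT| = (#|F| ^ \dim H)%N.
  by rewrite -(card_vspace (H : {vspace T})); apply: eq_card => a; rewrite inE.
have cardT : #|T| = (#|F| ^ \dim {:L})%N.
  by rewrite -(card_vspace (fullv : {vspace T})); apply: eq_card => a; rewrite memvf.
move=> card_lt; have /subsetPn [a _ aNbad] : ~~ ([set: T] \subset bad).
  apply: contraL card_lt => /subset_leq_card; rewrite cardsT cardT -leqNgt.
  move/leq_trans; apply; apply: leq_trans (leq_card_setU _ _) _.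
  rewrite cardHT leq_add2l curry_imset2X (leq_trans (leq_imset_card _ _)) //.
  by rewrite cardsX cardsT cardHT expnS.
move: aNbad; rewrite !inE negb_or => /andP [aNH a_quot]; exists a => // c s sH.
by apply: contraNneq a_quot => ->; apply/imset2P; exists c s; rewrite ?inE.
Qed.

End Extension.

Theorem lemma3p7 (F : finFieldType) (L : fieldExtType F) (m h : nat)
  (hm : \dim (fullv : {vspace L}) = m) (H : {vspace L})
  (hH : \dim H = h) (h1 : (1 <= h)%N) (h2 : (h <= m - 2)%N)
  (x y : L) (hx : x \notin H) :
  exists2 a : L, a \notin H & x + a * y \notin (H + <[a]>)%VS.
Proof.
have q_gt1 : (1 < #|F|)%N by rewrite (cardD1 0) (cardD1 1) !inE oner_neq0.
have card_lt : (#|F| ^ \dim H + #|F| ^ (\dim H).+1 < #|F| ^ \dim {:L})%N.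
  apply: leq_trans (ltn_expS_add _ q_gt1) _.
  rewrite hH hm leq_pexp2l ?(ltnW q_gt1) //; clear -h1 h2; lia.
have [a aNH a_good] := exists_notin_vspace_quotients x y card_lt.
exists a => //; apply/negP => /(memv_add_line_quotient hx) [c [s sH def_a]].
by have := a_good c s sH; rewrite -def_a eqxx.
Qed.
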